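(* Let $N\ge1$ be an integer and $x\in\mathbb{S}$. Then $\epsilon(N)-\epsilon(N+1)>0$, $\epsilon(N)-2\epsilon(N+1)+\epsilon(N+2)>0$, $\epsilon(N,x)-\epsilon(N+1,x)>0$ and $\epsilon(N,x)-2\epsilon(N+1,x)+\epsilon(N+2,x)>0$.
   Context: Let $\pi,q$ be probability densities with respect to a $\sigma$-finite measure $\mu$ on $\mathbb{X}$ with $q>0$ wherever $\pi>0$; $\pi(dx)=\pi(x)\mu(dx)$, $q(dx)=q(x)\mu(dx)$, $\mathbb{S}=\{\pi>0\}$, $w=\pi/q$ on $\mathbb{S}$ and $0$ elsewhere. For integer $N\ge1$ and $z_1\in\mathbb{S}$, $\epsilon(N,z_1)=\int_{\mathbb{X}^{N-1}}\frac{w(z_1)}{\sum_{i=1}^Nw(z_i)}\prod_{n=2}^Nq(dz_n)$ (so $\epsilon(1,z_1)=1$) and $\epsilon(N)=\int_{\mathbb{S}}\epsilon(N,z)\pi(dz)$. *)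

From HB Require Import structures.
From mathcomp Require Import all_boot all_order all_algebra.
From mathcomp Require Import all_classical all_reals all_analysis.
Set Implicit Arguments. Unset Strict Implicit. Unset Printing Implicit Defensive.
Import Order.TTheory GRing.Theory Num.Theory.
Local Open Scope classical_set_scope.
Local Open Scope ring_scope.

Section Defs.
Context (d : measure_display) (X : measurableType d) (R : realType)
  (mu : {measure set X -> \bar R}) (pi q : X -> R).

Definition supp : set X := [set x | 0 < pi x].

Definition weight (x : X) : R := if (0 < pi x)%R then pi x / q x else 0.

(* iter_q k g s = int_{X^k} g (s + w z_1 + ... + w z_k) prod q(dz_i),
   written as an iterated integral (Tonelli, nonnegative integrand) *)
Fixpoint iter_q (k : nat) (g : R -> \bar R) (s : R) : \bar R :=
  match k with
  | 0 => g s
  | k'.+1 => (\int[mu]_z ((q z)%:E * iter_q k' g (s + weight z)))%E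
  end.

(* eps(N, z1) = int_{X^{N-1}} w(z1) / (sum_{i=1}^N w(z_i)) prod_{n=2}^N q(dz_n) *)
Definition eps_pt (N : nat) (z1 : X) : \bar R :=
  iter_q N.-1 (fun s => (weight z1 / s)%:E) (weight z1).

Definition eps (N : nat) : \bar R :=
  (\int[mu]_(z in supp) ((pi z)%:E * eps_pt N z))%E.

End Defs.

From HB Require Import structures.
From mathcomp Require Import all_boot all_order all_algebra.
From mathcomp Require Import all_classical all_reals all_analysis.
From mathcomp Require Import measurable_realfun ring lra.
Import Order.TTheory GRing.Theory Num.Theory.
Set Implicit Arguments.
Unset Strict Implicit.
Unset Printing Implicit Defensive.
Local Open Scope classical_set_scope.
Local Open Scope ring_scope.

(* Let P h s := int q(z) h(s + w z) dz ([shift_avg]), so that iter_q k h = P^k h, and let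
   r t := 1/t ([recip]). Then eps(N+1, x) = w(x) (P^N r)(w(x)) and
   eps(N+1) = int_S pi(z) w(z) (P^N r)(w(z)) dz: both are images of P^N r under positive linear
   maps. If h is strictly decreasing, then h - P h ([avg_drop h]) equals
   int q(z) (h s - h(s + w z)) dz > 0, because q > 0 and w > 0 on the support of pi, a set of
   positive measure. As r is strictly convex, its increments decrease and r - P r is again
   strictly decreasing. Hence the first difference P^N r - P^(N+1) r = P^N (r - P r) and the
   second difference P^N ((r - P r) - P (r - P r)) are positive, and so are their images. *)

Lemma invrB_shift_lt (R : realFieldType) (s t e : R) : 0 < s -> s < t -> 0 < e ->
  t^-1 - (t + e)^-1 < s^-1 - (s + e)^-1.
Proof.
move=> s0 st e0; have t0 := lt_trans s0 st.
have invrB_shift u : 0 < u -> u^-1 - (u + e)^-1 = e / (u * (u + e)).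
  by move=> u0; field; rewrite !gt_eqF ?addr_gt0.
rewrite !invrB_shift // ltr_pM2l // ltf_pV2 ?posrE ?mulr_gt0 ?addr_gt0 //.
nra.
Qed.

Lemma first_second_differences_gt0 (R : realDomainType) (a0 a1 a2 d0 d1 d2 : \bar R) :
  a0 \is a fin_num -> (0 <= a2)%E -> (0 <= d1)%E ->
  a0 = (a1 + d0)%E -> a1 = (a2 + d1)%E -> d0 = (d1 + d2)%E -> (0 < d2)%E ->
  (0 < a0 - a1)%E /\ (0 < a0 - 2%:E * a1 + a2)%E.
Proof.
move=> a0_fin a2_ge0 d1_ge0 a0E a1E d0E; subst a0 a1 d0.
move: a2 d1 d2 a2_ge0 d1_ge0 a0_fin => [a2| |] [d1| |] [d2| |] //=.
rewrite !lee_fin !lte_fin => a2_ge0 d1_ge0 _ d2_gt0; split; lra.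
Qed.

Section integral_on_support.
Context d (X : measurableType d) (R : realType) (mu : {measure set X -> \bar R}) (pi : X -> R).
Hypotheses (pi_meas : measurable_fun setT pi) (pi_ge0 : forall x, 0 <= pi x)
  (pi_int_neq0 : (\int[mu]_x (pi x)%:E != 0)%E).
Local Open Scope ereal_scope.

Lemma integral_gt0_on_supp (D : set X) (f : X -> \bar R) :
  measurable D -> measurable_fun D f -> (forall z, D z -> 0 <= f z) ->
  (forall z, (0 < pi z)%R -> D z /\ 0 < f z) -> 0 < \int[mu]_(z in D) f z.
Proof.
move=> mD mf f_ge0 f_gt0; rewrite lt_def integral_ge0 // andbT.
apply: contra_neq pi_int_neq0 => intf0.
have : ae_eq mu D f (cst 0).
  apply/(ae_eq_integral_abs mu mD mf); rewrite -intf0.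
  by apply: eq_integral => z /[!inE] Dz; rewrite gee0_abs // f_ge0.
move=> [N [mN N0 fN]]; rewrite -(integral0 mu setT); apply: ge0_ae_eq_integral => //.
- exact/measurable_EFinP.
- by move=> z _; rewrite lee_fin.
- exists N; split => // z /= /not_implyP[_ pz_neq0]; apply: fN => /=.
  have pz_gt0 : (0 < pi z)%R by rewrite lt_def pi_ge0 andbT; apply: contra_notN pz_neq0 => /eqP ->.
  have [Dz fz_gt0] := f_gt0 z pz_gt0.
  by apply/not_implyP; split => // /eqP; rewrite gt_eqF.
Qed.

Lemma integral_lt_on_supp (f g : X -> \bar R) :
  measurable_fun setT f -> measurable_fun setT g -> (forall z, 0 <= f z) ->
  (forall z, f z <= g z) -> (forall z, g z \is a fin_num) ->
  (forall z, (0 < pi z)%R -> f z < g z) -> \int[mu]_z g z \is a fin_num ->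
  \int[mu]_z f z < \int[mu]_z g z.
Proof.
move=> mf mg f_ge0 fg g_fin fg_supp intg_fin.
have f_fin z : f z \is a fin_num.
  by rewrite ge0_fin_numE // (le_lt_trans (fg z)) // ltey_eq g_fin.
have gf_ge0 z : 0 <= g z - f z by rewrite sube_ge0 ?f_fin.
have splitg : \int[mu]_z g z = \int[mu]_z f z + \int[mu]_z (g z - f z).
  rewrite -ge0_integralD //; last exact: emeasurable_funB.
  by apply: eq_integral => z _; rewrite addeC subeK ?f_fin.
have intf_fin : \int[mu]_z f z \is a fin_num.
  rewrite ge0_fin_numE; last exact: integral_ge0.
  apply: (@le_lt_trans _ _ (\int[mu]_z g z)); first exact: ge0_le_integral.
  by rewrite -ge0_fin_numE // integral_ge0 // => z _; exact: le_trans (fg z).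
rewrite splitg lteDl // integral_gt0_on_supp //; first exact: emeasurable_funB.
by move=> z pz; split => //; rewrite sube_gt0 ?fg_supp.
Qed.

End integral_on_support.

Definition nnmeas (R : realType) (h : R -> \bar R) :=
  measurable_fun setT h /\ forall t, (0 <= h t)%E.

Definition decreasing_pos (R : realType) (h : R -> \bar R) :=
  forall s t, 0 < s -> s < t -> (h t < h s)%E.

Definition fin_num_pos (R : realType) (h : R -> \bar R) :=
  forall t, 0 < t -> h t \is a fin_num.

Lemma decreasing_pos_le (R : realType) (h : R -> \bar R) s t :
  decreasing_pos h -> 0 < s -> s <= t -> (h t <= h s)%E.
Proof. by move=> h_decr s_gt0; rewrite le_eqVlt => /predU1P[->//|st]; exact/ltW/h_decr. Qed.

Section reciprocal.
Context {R : realType}.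

Definition recip (t : R) : \bar R := if 0 < t then (t^-1)%:E else 0%E.

Lemma recipE t : 0 < t -> recip t = (t^-1)%:E.
Proof. by rewrite /recip => ->. Qed.

Lemma nnmeas_recip : nnmeas recip.
Proof.
split=> [|t]; last by rewrite /recip; case: ifPn => // t_gt0; rewrite lee_fin invr_ge0 ltW.
rewrite (_ : recip = fun t => if 0 < t then (t `^ (-1))%:E else 0%E).
  apply: measurable_fun_ifT; first exact: measurable_fun_ltr.
  - by apply/measurable_EFinP; exact: measurable_powR.
  - exact: measurable_cst.
by apply/funext => t; rewrite /recip; case: ifPn => // t_gt0; rewrite powRN powRr1 // ltW.
Qed.

Lemma fin_num_recip : fin_num_pos recip.
Proof. by move=> t t_gt0; rewrite recipE. Qed.

Lemma decreasing_recip : decreasing_pos recip.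
Proof.
move=> s t s_gt0 st; have t_gt0 := lt_trans s_gt0 st.
by rewrite !recipE // lte_fin ltf_pV2.
Qed.

Lemma recip_increment_decreasing s t e : 0 < s -> s < t -> 0 < e ->
  (recip t - recip (t + e) < recip s - recip (s + e))%E.
Proof.
move=> s_gt0 st e_gt0; have t_gt0 := lt_trans s_gt0 st.
by rewrite !recipE ?addr_gt0 // -!EFinB lte_fin invrB_shift_lt.
Qed.

End reciprocal.

Section shift_average.
Context d (X : measurableType d) (R : realType) (mu : {measure set X -> \bar R})
  (pi q : X -> R).
Hypotheses (mu_sf : sigma_finite setT mu)
  (pi_meas : measurable_fun setT pi) (q_meas : measurable_fun setT q)
  (pi_ge0 : forall x, 0 <= pi x) (q_ge0 : forall x, 0 <= q x)
  (pi_int1 : (\int[mu]_x (pi x)%:E = 1)%E) (q_int1 : (\int[mu]_x (q x)%:E = 1)%E)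
  (q_pos : forall x, 0 < pi x -> 0 < q x).

Local Notation w := (weight pi q).
Local Notation iter := (iter_q mu pi q).

Lemma weight_ge0 z : 0 <= w z.
Proof. by rewrite /weight; case: ifPn => // pz; rewrite divr_ge0 // ltW. Qed.

Lemma weight_gt0 z : 0 < pi z -> 0 < w z.
Proof. by move=> pz; rewrite /weight pz divr_gt0 // q_pos. Qed.

Lemma measurable_weight : measurable_fun setT w.
Proof.
rewrite (_ : w = fun z => if 0 < pi z then pi z * q z `^ (-1) else 0).
  apply: measurable_fun_ifT; first exact: measurable_fun_ltr.
  - by apply: measurable_funM => //; exact: measurableT_comp (measurable_powR _) q_meas.
  - exact: measurable_cst.
apply/funext => z; rewrite /weight; case: ifPn => // pz.
by rewrite powRN powRr1 // ltW // q_pos.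
Qed.

Local Open Scope ereal_scope.

Let pi_int_neq0 : \int[mu]_x (pi x)%:E != 0.
Proof. by rewrite pi_int1 onee_neq0. Qed.

Let integral_gt0_on_supp := integral_gt0_on_supp pi_meas pi_ge0 pi_int_neq0.
Let integral_lt_on_supp := integral_lt_on_supp pi_meas pi_ge0 pi_int_neq0.

Definition shift_avg (h : R -> \bar R) (s : R) : \bar R :=
  \int[mu]_z ((q z)%:E * h (s + w z)%R).

Lemma iter_qE k h : iter k.+1 h = shift_avg (iter k h).
Proof. by []. Qed.

Lemma iter_qSr k h s : iter k.+1 h s = iter k (shift_avg h) s.
Proof. by elim: k s => [//|k IHk] s; apply: eq_integral => z _; congr (_ * _); exact: IHk. Qed.

Lemma measurable_shift_integrand h s : measurable_fun setT h ->
  measurable_fun setT (fun z => (q z)%:E * h (s + w z)%R).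
Proof.
move=> mh; apply: emeasurable_funM; first exact/measurable_EFinP.
by apply: measurableT_comp mh _; exact: measurable_funD measurable_weight.
Qed.

Let mu_sigma_finite :=
  HB.pack_for (SigmaFiniteMeasure.type X R) (Measure.sort mu)
    (isSFinite.Build _ _ _ (Measure.sort mu) (sfinite_measure_sigma_finite mu_sf))
    (isSigmaFinite.Build _ _ _ (Measure.sort mu) mu_sf).

Lemma nnmeas_shift_avg h : nnmeas h -> nnmeas (shift_avg h).
Proof.
move=> [mh h_ge0]; split; last first.
  by move=> s; apply: integral_ge0 => z _; rewrite mule_ge0 // lee_fin.
pose f (p : R * X) := (q p.2)%:E * h (p.1 + w p.2)%R.
have mf : measurable_fun setT f.
  apply: emeasurable_funM; first exact/measurable_EFinP/measurableT_comp.
  apply: measurableT_comp mh _; apply: measurable_funD => //.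
  exact: measurableT_comp measurable_weight _.
have f_ge0 p : 0 <= f p by rewrite mule_ge0 // lee_fin.
exact: (measurable_fun_fubini_tonelli_F (m2 := mu_sigma_finite) f mf f_ge0).
Qed.

Lemma nnmeas_iter_q k h : nnmeas h -> nnmeas (iter k h).
Proof. by move=> h_nn; elim: k => // k IHk; exact: nnmeas_shift_avg. Qed.

Lemma shift_avg_cst c s : 0 <= c -> shift_avg (fun=> c) s = c.
Proof.
move=> c_ge0; rewrite /shift_avg /= ge0_integralZr //; first by rewrite q_int1 mul1e.
- exact/measurable_EFinP.
- by move=> z _; rewrite lee_fin.
Qed.

Lemma eq_shift_avg h1 h2 s : (forall t, (s <= t)%R -> h1 t = h2 t) ->
  shift_avg h1 s = shift_avg h2 s.
Proof. by move=> h12; apply: eq_integral => z _; rewrite h12 // lerDl weight_ge0. Qed.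

Lemma shift_avgD h1 h2 s : nnmeas h1 -> nnmeas h2 ->
  shift_avg (fun t => h1 t + h2 t) s = shift_avg h1 s + shift_avg h2 s.
Proof.
move=> [m1 h1_ge0] [m2 h2_ge0]; rewrite /shift_avg -ge0_integralD //.
- by apply: eq_integral => z _; rewrite ge0_muleDr.
- by move=> z _; rewrite mule_ge0 // lee_fin.
- exact: measurable_shift_integrand.
- by move=> z _; rewrite mule_ge0 // lee_fin.
- exact: measurable_shift_integrand.
Qed.

Lemma shift_avgZ c h s : (0 <= c)%R -> nnmeas h ->
  shift_avg (fun t => c%:E * h t) s = c%:E * shift_avg h s.
Proof.
move=> c_ge0 [mh h_ge0]; rewrite /shift_avg -ge0_integralZl //.
- by apply: eq_integral => z _; rewrite muleCA.
- exact: measurable_shift_integrand.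
- by move=> z _; rewrite mule_ge0 // lee_fin.
Qed.

Lemma shift_avg_le h c s : nnmeas h -> 0 <= c -> (forall t, (s <= t)%R -> h t <= c) ->
  shift_avg h s <= c.
Proof.
move=> [mh h_ge0] c_ge0 h_le; rewrite -[leRHS](shift_avg_cst s c_ge0).
apply: ge0_le_integral => //.
- by move=> z _; rewrite mule_ge0 // lee_fin.
- exact: measurable_shift_integrand.
- apply: emeasurable_funM; [exact/measurable_EFinP | exact: measurable_cst].
- by move=> z _; rewrite lee_wpmul2l ?lee_fin // h_le // lerDl weight_ge0.
Qed.

Lemma shift_avg_gt0 h s : nnmeas h -> (forall t, (0 < t)%R -> 0 < h t) -> (0 < s)%R ->
  0 < shift_avg h s.
Proof.
move=> [mh h_ge0] h_gt0 s_gt0; apply: integral_gt0_on_supp => //.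
- exact: measurable_shift_integrand.
- by move=> z _; rewrite mule_ge0 // lee_fin.
- move=> z pz; split => //; rewrite mule_gt0 ?lte_fin ?q_pos // h_gt0 //.
  by rewrite ltr_wpDr // weight_ge0.
Qed.

Lemma eq_iter_q k h1 h2 s : (forall t, (s <= t)%R -> h1 t = h2 t) ->
  iter k h1 s = iter k h2 s.
Proof.
elim: k s => [|k IHk] s h12; first exact: h12.
by apply: eq_shift_avg => t st; apply: IHk => u tu; apply: h12; exact: le_trans tu.
Qed.

Lemma iter_qD k h1 h2 s : nnmeas h1 -> nnmeas h2 ->
  iter k (fun t => h1 t + h2 t) s = iter k h1 s + iter k h2 s.
Proof.
move=> h1_nn h2_nn; elim: k s => [//|k IHk] s.
rewrite !iter_qE -shift_avgD; try exact: nnmeas_iter_q.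
by apply: eq_shift_avg => t _; exact: IHk.
Qed.

Lemma iter_qZ k c h s : (0 <= c)%R -> nnmeas h ->
  iter k (fun t => c%:E * h t) s = c%:E * iter k h s.
Proof.
move=> c_ge0 h_nn; elim: k s => [//|k IHk] s.
rewrite !iter_qE -shift_avgZ //; last exact: nnmeas_iter_q.
by apply: eq_shift_avg => t _; exact: IHk.
Qed.

Lemma iter_q_le k h c s : nnmeas h -> 0 <= c -> (forall t, (s <= t)%R -> h t <= c) ->
  iter k h s <= c.
Proof.
move=> h_nn c_ge0; elim: k s => [|k IHk] s h_le; first exact: h_le.
apply: shift_avg_le => //; first exact: nnmeas_iter_q.
by move=> t st; apply: IHk => u tu; apply: h_le; exact: le_trans tu.
Qed.

Lemma iter_q_gt0 k h s : nnmeas h -> (forall t, (0 < t)%R -> 0 < h t) -> (0 < s)%R ->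
  0 < iter k h s.
Proof.
move=> h_nn h_gt0; elim: k s => [|k IHk] s s_gt0; first exact: h_gt0.
by apply: shift_avg_gt0 => //; exact: nnmeas_iter_q.
Qed.

(* Only values on (0, +oo) matter; the junk value 0 elsewhere keeps [avg_drop h]
   nonnegative, as Tonelli's theorem behind [nnmeas_shift_avg] requires. *)
Definition avg_drop (h : R -> \bar R) (t : R) : \bar R :=
  if (0 < t)%R then h t - shift_avg h t else 0.

Section average_drop.
Variable h : R -> \bar R.
Hypotheses (h_nn : nnmeas h) (h_fin : fin_num_pos h) (h_decr : decreasing_pos h).

Let increment_ge0 t z : (0 < t)%R -> 0 <= h t - h (t + w z)%R.
Proof.
move=> t_gt0; have twz_gt0 : (0 < t + w z)%R by rewrite ltr_wpDr // weight_ge0.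
by rewrite sube_ge0 ?h_fin // decreasing_pos_le // lerDl weight_ge0.
Qed.

Let measurable_drop_integrand t :
  measurable_fun setT (fun z => (q z)%:E * (h t - h (t + w z)%R)).
Proof.
apply: emeasurable_funM; first exact/measurable_EFinP.
apply: emeasurable_funB; first exact: measurable_cst.
by apply: measurableT_comp h_nn.1 _; exact: measurable_funD measurable_weight.
Qed.

Lemma shift_avg_le_self t : (0 < t)%R -> shift_avg h t <= h t.
Proof.
move=> t_gt0; apply: shift_avg_le => //; first exact: h_nn.2.
by move=> u tu; exact: decreasing_pos_le.
Qed.

Lemma fin_num_shift_avg t : (0 < t)%R -> shift_avg h t \is a fin_num.
Proof.
move=> t_gt0; rewrite ge0_fin_numE; last exact: (nnmeas_shift_avg h_nn).2.
by rewrite (le_lt_trans (shift_avg_le_self t_gt0)) // ltey_eq h_fin.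
Qed.

Lemma shift_avg_add_drop t : (0 < t)%R -> h t = shift_avg h t + avg_drop h t.
Proof. by move=> t_gt0; rewrite /avg_drop t_gt0 addeC subeK // fin_num_shift_avg. Qed.

Lemma avg_dropE t : (0 < t)%R ->
  avg_drop h t = \int[mu]_z ((q z)%:E * (h t - h (t + w z)%R)).
Proof.
move=> t_gt0; rewrite /avg_drop t_gt0.
have splitE : \int[mu]_z ((q z)%:E * (h t - h (t + w z)%R)) + shift_avg h t = h t.
  rewrite -[RHS](shift_avg_cst t (h_nn.2 t)) /shift_avg /= -ge0_integralD //.
  - apply: eq_integral => z _; rewrite -ge0_muleDr ?increment_ge0 ?h_nn.2 //.
    by rewrite subeK // h_fin // ltr_wpDr // weight_ge0.
  - by move=> z _; rewrite mule_ge0 ?lee_fin ?increment_ge0.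
  - by move=> z _; rewrite mule_ge0 ?lee_fin ?h_nn.2.
  - exact: measurable_shift_integrand h_nn.1.
by rewrite -{1}splitE addeK // fin_num_shift_avg.
Qed.

Lemma nnmeas_avg_drop : nnmeas (avg_drop h).
Proof.
split=> [|t]; last first.
  rewrite /avg_drop; case: ifPn => // t_gt0.
  by rewrite sube_ge0 ?fin_num_shift_avg // shift_avg_le_self.
apply: measurable_fun_ifT; first exact: measurable_fun_ltr.
- exact: emeasurable_funB h_nn.1 (nnmeas_shift_avg h_nn).1.
- exact: measurable_cst.
Qed.

Lemma fin_num_avg_drop : fin_num_pos (avg_drop h).
Proof. by move=> t t_gt0; rewrite /avg_drop t_gt0 fin_numB h_fin ?fin_num_shift_avg. Qed.

Lemma avg_drop_gt0 t : (0 < t)%R -> 0 < avg_drop h t.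
Proof.
move=> t_gt0; rewrite avg_dropE //; apply: integral_gt0_on_supp => //.
- by move=> z _; rewrite mule_ge0 ?lee_fin ?increment_ge0.
- move=> z pz; split => //; rewrite mule_gt0 ?lte_fin ?q_pos // sube_gt0 ?h_fin //.
  by rewrite h_decr // ltrDl weight_gt0.
Qed.

Lemma iter_q_drop k t : (0 < t)%R ->
  iter k h t = iter k.+1 h t + iter k (avg_drop h) t.
Proof.
move=> t_gt0; rewrite iter_qSr -iter_qD; last 2 first.
- exact: nnmeas_shift_avg.
- exact: nnmeas_avg_drop.
by apply: eq_iter_q => u tu; apply: shift_avg_add_drop; exact: lt_le_trans tu.
Qed.

Hypothesis h_increment_decreasing : forall s t e, (0 < s)%R -> (s < t)%R -> (0 < e)%R ->
  h t - h (t + e)%R < h s - h (s + e)%R.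

Lemma decreasing_avg_drop : decreasing_pos (avg_drop h).
Proof.
move=> s t s_gt0 st; have t_gt0 := lt_trans s_gt0 st.
rewrite !avg_dropE //; apply: integral_lt_on_supp; try exact: measurable_drop_integrand.
- by move=> z; rewrite mule_ge0 ?lee_fin ?increment_ge0.
- move=> z; rewrite lee_wpmul2l ?lee_fin //.
  have := weight_ge0 z; rewrite le_eqVlt => /predU1P[<-|wz_gt0].
    by rewrite !addr0 !subee ?h_fin.
  exact/ltW/h_increment_decreasing.
- by move=> z; rewrite fin_numM // fin_numB !h_fin // ltr_wpDr // weight_ge0.
- move=> z pz; rewrite lte_pmul2l ?lte_fin ?q_pos //.
  by apply: h_increment_decreasing => //; exact: weight_gt0.
- by rewrite -avg_dropE // fin_num_avg_drop.
Qed.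

End average_drop.

Lemma iter_q_recip_le k t : (0 < t)%R -> iter k recip t <= (t^-1)%:E.
Proof.
move=> t_gt0; apply: iter_q_le; [exact: nnmeas_recip | by rewrite lee_fin invr_ge0 ltW |].
by move=> u tu; rewrite -recipE //; exact: decreasing_pos_le decreasing_recip t_gt0 tu.
Qed.

Section positive_functional.
Variable L : (R -> \bar R) -> \bar R.
Hypotheses
  (LD : forall f1 f2, nnmeas f1 -> nnmeas f2 -> L (fun t => f1 t + f2 t) = L f1 + L f2)
  (eq_L : forall f1 f2, (forall t, (0 < t)%R -> f1 t = f2 t) -> L f1 = L f2)
  (L_ge0 : forall f, nnmeas f -> 0 <= L f)
  (L_gt0 : forall f, nnmeas f -> (forall t, (0 < t)%R -> 0 < f t) -> 0 < L f).

Let L_iter_q_drop k h : nnmeas h -> fin_num_pos h -> decreasing_pos h ->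
  L (iter k h) = L (iter k.+1 h) + L (iter k (avg_drop h)).
Proof.
move=> h_nn h_fin h_decr; rewrite -LD; [|exact: nnmeas_iter_q..|].
- by apply: eq_L => t t_gt0; exact: iter_q_drop.
- exact/nnmeas_iter_q/nnmeas_avg_drop.
Qed.

Lemma recip_differences_gt0 k : L (iter k recip) \is a fin_num ->
  0 < L (iter k recip) - L (iter k.+1 recip) /\
  0 < L (iter k recip) - 2%:E * L (iter k.+1 recip) + L (iter k.+2 recip).
Proof.
have drop_nn := nnmeas_avg_drop nnmeas_recip fin_num_recip decreasing_recip.
have drop_fin := fin_num_avg_drop nnmeas_recip fin_num_recip decreasing_recip.
have drop_decr := decreasing_avg_drop nnmeas_recip fin_num_recip decreasing_recip
  recip_increment_decreasing.
move=> L_fin; apply: (first_second_differences_gt0 L_fin _ _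
  (L_iter_q_drop k nnmeas_recip fin_num_recip decreasing_recip)
  (L_iter_q_drop k.+1 nnmeas_recip fin_num_recip decreasing_recip)
  (L_iter_q_drop k drop_nn drop_fin drop_decr)).
- by apply: L_ge0; exact: nnmeas_iter_q nnmeas_recip.
- by apply: L_ge0; exact: nnmeas_iter_q drop_nn.
- apply: L_gt0; first exact/nnmeas_iter_q/nnmeas_avg_drop.
  by move=> t t_gt0; apply: iter_q_gt0 => //; [exact: nnmeas_avg_drop | exact: avg_drop_gt0].
Qed.

End positive_functional.

Lemma eps_ptE k z : (0 < pi z)%R -> eps_pt mu pi q k.+1 z = (w z)%:E * iter k recip (w z).
Proof.
move=> pz; rewrite /eps_pt /= -iter_qZ ?weight_ge0 //; last exact: nnmeas_recip.
apply: eq_iter_q => t wt; have t_gt0 := lt_le_trans (weight_gt0 pz) wt.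
by rewrite recipE // -EFinM.
Qed.

Lemma eps_pt_differences_gt0 k x : (0 < pi x)%R ->
  0 < eps_pt mu pi q k.+1 x - eps_pt mu pi q k.+2 x /\
  0 < eps_pt mu pi q k.+1 x - 2%:E * eps_pt mu pi q k.+2 x + eps_pt mu pi q k.+3 x.
Proof.
move=> px; have wx_gt0 := weight_gt0 px.
rewrite !eps_ptE //; apply: (recip_differences_gt0 (L := fun f => (w x)%:E * f (w x))).
- by move=> f1 f2 [_ f1_ge0] [_ f2_ge0]; rewrite ge0_muleDr.
- by move=> f1 f2 f12; rewrite f12.
- by move=> f [_ f_ge0]; rewrite mule_ge0 ?lee_fin ?weight_ge0.
- by move=> f _ f_gt0; rewrite mule_gt0 ?lte_fin ?f_gt0.
- rewrite fin_numM // ge0_fin_numE; last exact/(nnmeas_iter_q k nnmeas_recip).2.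
  by rewrite (le_lt_trans (iter_q_recip_le k wx_gt0)) ?ltry.
Qed.

Lemma measurable_supp : measurable (supp pi).
Proof.
rewrite (_ : supp pi = pi @^-1` `]0%R, +oo[); last first.
  by apply/seteqP; split => z /=; rewrite in_itv /= andbT.
by rewrite -[_ @^-1` _]setTI; exact: pi_meas.
Qed.

Definition pi_weighted (f : R -> \bar R) : \bar R :=
  \int[mu]_(z in supp pi) ((pi z)%:E * ((w z)%:E * f (w z))).

Let measurable_pi_weighted_integrand f : measurable_fun setT f ->
  measurable_fun (supp pi) (fun z => (pi z)%:E * ((w z)%:E * f (w z))).
Proof.
move=> mf; apply: measurable_funTS; apply: emeasurable_funM; first exact/measurable_EFinP.
apply: emeasurable_funM; first exact/measurable_EFinP/measurable_weight.
exact: measurableT_comp mf measurable_weight.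
Qed.

Let pi_weighted_integrand_ge0 f z : (forall t, 0 <= f t) ->
  0 <= (pi z)%:E * ((w z)%:E * f (w z)).
Proof. by move=> f_ge0; rewrite !mule_ge0 ?lee_fin ?weight_ge0. Qed.

Lemma epsE k : eps mu pi q k.+1 = pi_weighted (iter k recip).
Proof. by apply: eq_integral => z /[!inE] pz; rewrite eps_ptE. Qed.

Lemma pi_weightedD f1 f2 : nnmeas f1 -> nnmeas f2 ->
  pi_weighted (fun t => f1 t + f2 t) = pi_weighted f1 + pi_weighted f2.
Proof.
move=> [mf1 f1_ge0] [mf2 f2_ge0]; rewrite -ge0_integralD; last 5 first.
- exact: measurable_supp.
- by move=> z _; exact: pi_weighted_integrand_ge0.
- exact: measurable_pi_weighted_integrand.
- by move=> z _; exact: pi_weighted_integrand_ge0.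
- exact: measurable_pi_weighted_integrand.
by apply: eq_integral => z _; rewrite !ge0_muleDr ?mule_ge0 ?lee_fin ?weight_ge0.
Qed.

Lemma eq_pi_weighted f1 f2 : (forall t, (0 < t)%R -> f1 t = f2 t) ->
  pi_weighted f1 = pi_weighted f2.
Proof. by move=> f12; apply: eq_integral => z /[!inE] pz; rewrite f12 // weight_gt0. Qed.

Lemma pi_weighted_ge0 f : nnmeas f -> 0 <= pi_weighted f.
Proof. by move=> [_ f_ge0]; apply: integral_ge0 => z _; exact: pi_weighted_integrand_ge0. Qed.

Lemma pi_weighted_gt0 f : nnmeas f -> (forall t, (0 < t)%R -> 0 < f t) ->
  0 < pi_weighted f.
Proof.
move=> [mf f_ge0] f_gt0; apply: integral_gt0_on_supp.
- exact: measurable_supp.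
- exact: measurable_pi_weighted_integrand.
- by move=> z _; exact: pi_weighted_integrand_ge0.
- by move=> z pz; split => //; rewrite !mule_gt0 ?lte_fin ?weight_gt0 ?f_gt0 ?weight_gt0.
Qed.

Lemma pi_weighted_le1 f : nnmeas f -> (forall t, (0 < t)%R -> f t <= (t^-1)%:E) ->
  pi_weighted f <= 1.
Proof.
move=> [mf f_ge0] f_le; apply: (@le_trans _ _ (\int[mu]_(z in supp pi) (pi z)%:E)).
  apply: ge0_le_integral.
  - exact: measurable_supp.
  - by move=> z _; exact: pi_weighted_integrand_ge0.
  - exact: measurable_pi_weighted_integrand.
  - by apply: measurable_funTS; exact/measurable_EFinP.
  move=> z /= pz; have wz_gt0 := weight_gt0 pz.
  rewrite -[leRHS]mule1 lee_wpmul2l ?lee_fin //.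
  rewrite (le_trans (lee_wpmul2l _ (f_le _ wz_gt0))) ?lee_fin ?weight_ge0 //.
  by rewrite divff ?gt_eqF.
rewrite -pi_int1; apply: ge0_subset_integral => //; first exact: measurable_supp.
- exact/measurable_EFinP.
- by move=> z _; rewrite lee_fin.
Qed.

Lemma eps_differences_gt0 k :
  0 < eps mu pi q k.+1 - eps mu pi q k.+2 /\
  0 < eps mu pi q k.+1 - 2%:E * eps mu pi q k.+2 + eps mu pi q k.+3.
Proof.
rewrite !epsE; apply: recip_differences_gt0.
- exact: pi_weightedD.
- exact: eq_pi_weighted.
- exact: pi_weighted_ge0.
- exact: pi_weighted_gt0.
have iter_nn := nnmeas_iter_q k nnmeas_recip.
rewrite ge0_fin_numE ?pi_weighted_ge0 // (le_lt_trans (pi_weighted_le1 iter_nn _)) ?ltry //.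
by move=> t; exact: iter_q_recip_le.
Qed.

End shift_average.

Theorem lemma6p9 (d : measure_display) (X : measurableType d) (R : realType)
  (mu : {measure set X -> \bar R}) (pi q : X -> R)
  (mu_sf : sigma_finite setT mu)
  (pi_meas : measurable_fun setT pi) (q_meas : measurable_fun setT q)
  (pi_ge0 : forall x, 0 <= pi x) (q_ge0 : forall x, 0 <= q x)
  (pi_int1 : (\int[mu]_x (pi x)%:E = 1)%E)
  (q_int1 : (\int[mu]_x (q x)%:E = 1)%E)
  (q_pos : forall x, 0 < pi x -> 0 < q x)
  (N : nat) (N_ge1 : (1 <= N)%N) (x : X) (x_S : supp pi x) :
  (0 < eps mu pi q N - eps mu pi q N.+1)%E /\
  (0 < eps mu pi q N - 2%:E * eps mu pi q N.+1 + eps mu pi q N.+2)%E /\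
  (0 < eps_pt mu pi q N x - eps_pt mu pi q N.+1 x)%E /\
  (0 < eps_pt mu pi q N x - 2%:E * eps_pt mu pi q N.+1 x + eps_pt mu pi q N.+2 x)%E.
Proof.
case: N N_ge1 => // k _.
have [eps1 eps2] :=
  eps_differences_gt0 mu_sf pi_meas q_meas pi_ge0 q_ge0 pi_int1 q_int1 q_pos k.
have [eps_pt1 eps_pt2] :=
  eps_pt_differences_gt0 mu_sf pi_meas q_meas pi_ge0 q_ge0 pi_int1 q_int1 q_pos k x_S.
by [].
Qed.
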